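(* The set $P=\bigsqcup_{n\ge1}P_n$, equipped with the operations $\dashv,\vdash,\perp$ described in the context, is an associative trioid, and it is the free associative trioid on the one generator $\{0\}\in P_1$. Precisely, let $\mathcal T$ be the free associative trioid on one generator $x$. Then the unique trioid morphism $\phi:\mathcal T\to P$ with $\phi(x)=\{0\}$ is a bijection, and it maps the elements of $\mathcal T$ that are products of $n$ copies of $x$ onto $P_n$.
   Context: An associative trioid is a set $X$ equipped with three binary operations $\dashv,\vdash,\perp:X\times X\to X$ satisfying for all $x,y,z\in X$ the following 11 relations: (1) $(x\dashv y)\dashv z=x\dashv(y\dashv z)$; (2) $(x\dashv y)\dashv z=x\dashv(y\vdash z)$; (3) $(x\vdash y)\dashv z=x\vdash(y\dashv z)$; (4) $(x\dashv y)\vdash z=x\vdash(y\vdash z)$; (5) $(x\vdash y)\vdash z=x\vdash(y\vdash z)$; (6) $(x\dashv y)\dashv z=x\dashv(y\perp z)$; (7) $(x\perp y)\dashv z=x\perp(y\dashv z)$; (8) $(x\dashv y)\perp z=x\perp(y\vdash z)$; (9) $(x\vdash y)\perp z=x\vdash(y\perp z)$; (10) $(x\perp y)\vdash z=x\vdash(y\vdash z)$; (11) $(x\perp y)\perp z=x\perp(y\perp z)$. A morphism of trioids is a map preserving all three operations. For $n\ge1$ let $[n-1]=\{0,\dots,n-1\}$ and let $P_n$ be the set of nonempty subsets of $[n-1]$. For $p,q\ge1$ let $\mathrm{bij}:[p-1]\sqcup[q-1]\to[p+q-1]$ be the identity on the first copy and $k\mapsto p+k$ on the second copy. For $X\in P_p$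 and $Y\in P_q$ set, in $P_{p+q}$: - $X\dashv Y=\mathrm{bij}(X)$ (with $X$ in the first copy); - $X\vdash Y=\mathrm{bij}(Y)$ (with $Y$ in the second copy); - $X\perp Y=\mathrm{bij}(X\sqcup Y)$. *)

From mathcomp Require Import all_boot.
Set Implicit Arguments. Unset Strict Implicit. Unset Printing Implicit Defensive.

(** Abstract trioid axioms (1)-(11) for three binary operations
    l = "dashv", r = "vdash", p = "perp". *)
Definition is_trioid (X : Type) (l r p : X -> X -> X) : Prop :=
  (forall x y z, l (l x y) z = l x (l y z)) /\
  (forall x y z, l (l x y) z = l x (r y z)) /\
  (forall x y z, l (r x y) z = r x (l y z)) /\
  (forall x y z, r (l x y) z = r x (r y z)) /\
  (forall x y z, r (r x y) z = r x (r y z)) /\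
  (forall x y z, l (l x y) z = l x (p y z)) /\
  (forall x y z, l (p x y) z = p x (l y z)) /\
  (forall x y z, p (l x y) z = p x (r y z)) /\
  (forall x y z, p (r x y) z = r x (p y z)) /\
  (forall x y z, r (p x y) z = r x (r y z)) /\
  (forall x y z, p (p x y) z = p x (p y z)).

(** The set P = disjoint union over n of the nonempty subsets of [n-1] = 'I_n. *)
Definition Praw := {n : nat & {set 'I_n}}.
Definition Pvalid (x : Praw) : bool := projT2 x != set0.
Definition P := {x : Praw | Pvalid x}.
Definition deg (x : P) : nat := projT1 (proj1_sig x).

(* bij on the first copy is lshift, on the second copy is rshift *)
Definition rawL (x y : Praw) : Praw :=
  existT _ (projT1 x + projT1 y) (lshift (projT1 y) @: projT2 x).
Definition rawR (x y : Praw) : Praw :=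
  existT _ (projT1 x + projT1 y) (@rshift (projT1 x) (projT1 y) @: projT2 y).
Definition rawP (x y : Praw) : Praw :=
  existT _ (projT1 x + projT1 y)
    ((lshift (projT1 y) @: projT2 x) :|: (@rshift (projT1 x) (projT1 y) @: projT2 y)).

Lemma rawL_valid x y : Pvalid x -> Pvalid (rawL x y).
Proof. by case: x => n X; case: y => m Y; rewrite /Pvalid /= imset_eq0. Qed.
Lemma rawR_valid x y : Pvalid y -> Pvalid (rawR x y).
Proof. by case: x => n X; case: y => m Y; rewrite /Pvalid /= imset_eq0. Qed.
Lemma rawP_valid x y : Pvalid x -> Pvalid (rawP x y).
Proof.
case: x => n X; case: y => m Y; rewrite /Pvalid /= => hx.
by rewrite setU_eq0 negb_and imset_eq0 hx.
Qed.

Definition pL (x y : P) : P :=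
  exist _ (rawL (proj1_sig x) (proj1_sig y)) (rawL_valid (proj1_sig y) (proj2_sig x)).
Definition pR (x y : P) : P :=
  exist _ (rawR (proj1_sig x) (proj1_sig y)) (rawR_valid (proj1_sig x) (proj2_sig y)).
Definition pP (x y : P) : P :=
  exist _ (rawP (proj1_sig x) (proj1_sig y)) (rawP_valid (proj1_sig y) (proj2_sig x)).

Lemma gen_valid : Pvalid (existT _ 1 [set ord0 : 'I_1]).
Proof. by apply/set0Pn; exists ord0; rewrite in_set1. Qed.
Definition genP : P := exist (fun x : Praw => Pvalid x) _ gen_valid.

(** The free associative trioid on one generator x: terms modulo the
    congruence generated by (1)-(11). *)
Inductive term : Type :=
| tX : term
| tL : term -> term -> term
| tR : term -> term -> term
| tP : term -> term -> term.

Inductive teq : term -> term -> Prop :=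
| teq_refl t : teq t t
| teq_sym s t : teq s t -> teq t s
| teq_trans s t u : teq s t -> teq t u -> teq s u
| teq_L s s' t t' : teq s s' -> teq t t' -> teq (tL s t) (tL s' t')
| teq_R s s' t t' : teq s s' -> teq t t' -> teq (tR s t) (tR s' t')
| teq_P s s' t t' : teq s s' -> teq t t' -> teq (tP s t) (tP s' t')
| ax1 x y z : teq (tL (tL x y) z) (tL x (tL y z))
| ax2 x y z : teq (tL (tL x y) z) (tL x (tR y z))
| ax3 x y z : teq (tL (tR x y) z) (tR x (tL y z))
| ax4 x y z : teq (tR (tL x y) z) (tR x (tR y z))
| ax5 x y z : teq (tR (tR x y) z) (tR x (tR y z))
| ax6 x y z : teq (tL (tL x y) z) (tL x (tP y z))
| ax7 x y z : teq (tL (tP x y) z) (tP x (tL y z))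
| ax8 x y z : teq (tP (tL x y) z) (tP x (tR y z))
| ax9 x y z : teq (tP (tR x y) z) (tR x (tP y z))
| ax10 x y z : teq (tR (tP x y) z) (tR x (tR y z))
| ax11 x y z : teq (tP (tP x y) z) (tP x (tP y z)).

Fixpoint leaves (t : term) : nat :=
  match t with
  | tX => 1
  | tL a b | tR a b | tP a b => leaves a + leaves b
  end.

Fixpoint phi (t : term) : P :=
  match t with
  | tX => genP
  | tL a b => pL (phi a) (phi b)
  | tR a b => pR (phi a) (phi b)
  | tP a b => pP (phi a) (phi b)
  end.

From mathcomp Require Import all_boot.
Set Implicit Arguments. Unset Strict Implicit. Unset Printing Implicit Defensive.

(* Recording which points of [n-1] an element of P_n contains turns P_n into
   the bit-words of length n with at least one 1, and the three products into
   u 0^|v|, 0^|u| v and uv; the eleven trioid axioms become identities between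
   words.  Conversely the axioms rewrite every term into a normal form that
   depends only on its word: the leading bits are read off as x ⊥ _ (for a 1)
   or x ⊢ _ (for a 0) until the remaining word is 1 0^k, which becomes the
   comb x ⊣ (x ⊣ ... x).  Terms with the same image are therefore congruent,
   and the normal form of a word is a preimage of it. *)

Lemma enum_ord_add n m :
  enum 'I_(n + m) = map (@lshift n m) (enum 'I_n) ++ map (@rshift n m) (enum 'I_m).
Proof.
apply: (inj_map val_inj); rewrite map_cat val_enum_ord iotaD add0n.
congr (_ ++ _); rewrite -[RHS]map_comp.
  by rewrite -val_enum_ord; apply: eq_map.
by rewrite -[n in iota n]addn0 iotaDl -val_enum_ord -map_comp; apply: eq_map.
Qed.

Lemma preimset_imset_inj (aT rT : finType) (f : aT -> rT) (A : {set aT}) :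
  injective f -> f @^-1: (f @: A) = A.
Proof. by move=> f_inj; apply/setP => x; rewrite inE mem_imset. Qed.

Lemma preimset_imset_disjoint (aT bT rT : finType) (f : aT -> rT) (g : bT -> rT)
    (B : {set bT}) :
  (forall x y, f x != g y) -> f @^-1: (g @: B) = set0.
Proof.
move=> fg; apply/setP => x; rewrite !inE.
by apply/imsetP => -[y _ fxgy]; move: (fg x y); rewrite fxgy eqxx.
Qed.

Definition charw n (X : {set 'I_n}) : seq bool := [seq i \in X | i <- enum 'I_n].

Lemma size_charw n (X : {set 'I_n}) : size (charw X) = n.
Proof. by rewrite size_map size_enum_ord. Qed.

Lemma nth_charw n (X : {set 'I_n}) (i : 'I_n) : nth false (charw X) i = (i \in X).
Proof. by rewrite (nth_map i) ?size_enum_ord // nth_ord_enum. Qed.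

Lemma charw_inj n : injective (@charw n).
Proof. by move=> X Y eXY; apply/setP => i; rewrite -!nth_charw eXY. Qed.

Lemma has_charw n (X : {set 'I_n}) : has id (charw X) = (X != set0).
Proof.
rewrite has_map; apply/hasP/set0Pn => [[i _ iX] | [i iX]]; exists i => //.
exact: mem_enum.
Qed.

Lemma charw0 n : charw (set0 : {set 'I_n}) = nseq n false.
Proof.
rewrite -[n in nseq n](size_charw set0).
by apply/all_pred1P/allP => _ /mapP[i _ ->]; rewrite in_set0.
Qed.

Lemma charw_split n m (Z : {set 'I_(n + m)}) :
  charw Z = charw (lshift m @^-1: Z) ++ charw (@rshift n m @^-1: Z).
Proof.
rewrite {1}/charw enum_ord_add map_cat.
by congr (_ ++ _); rewrite -map_comp; apply: eq_map => i /=; rewrite inE.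
Qed.

Lemma charw_lshift n m (X : {set 'I_n}) :
  charw (lshift m @: X) = charw X ++ nseq m false.
Proof.
rewrite charw_split preimset_imset_inj; last exact: lshift_inj.
by rewrite preimset_imset_disjoint ?charw0 // => i j; rewrite eq_rlshift.
Qed.

Lemma charw_rshift n m (Y : {set 'I_m}) :
  charw (@rshift n m @: Y) = nseq n false ++ charw Y.
Proof.
rewrite charw_split preimset_imset_inj; last exact: rshift_inj.
by rewrite preimset_imset_disjoint ?charw0 // => i j; rewrite eq_lrshift.
Qed.

Lemma charw_shiftU n m (X : {set 'I_n}) (Y : {set 'I_m}) :
  charw ((lshift m @: X) :|: (@rshift n m @: Y)) = charw X ++ charw Y.
Proof.
rewrite charw_split !preimsetU (preimset_imset_inj _ (@lshift_inj n m)).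
rewrite (preimset_imset_inj _ (@rshift_inj n m)).
by rewrite !preimset_imset_disjoint ?setU0 ?set0U // => i j; rewrite eq_shift.
Qed.

Definition word (x : P) : seq bool := charw (projT2 (sval x)).

Lemma size_word x : size (word x) = deg x.
Proof. exact: size_charw. Qed.

Lemma has_word x : has id (word x).
Proof. by rewrite has_charw; exact: (svalP x). Qed.

Lemma word_inj : injective word.
Proof.
move=> [[n X] hX] [[m Y] hY] eXY.
have enm : n = m by rewrite -(size_charw X) -(size_charw Y); exact: congr1 eXY.
subst m; move/charw_inj: eXY => /= eXY; subst Y.
by rewrite (bool_irrelevance hX hY).
Qed.

Lemma wordL x y : word (pL x y) = word x ++ nseq (size (word y)) false.
Proof. by rewrite size_word; apply: charw_lshift. Qed.

Lemma wordR x y : word (pR x y) = nseq (size (word x)) false ++ word y.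
Proof. by rewrite size_word; apply: charw_rshift. Qed.

Lemma wordP x y : word (pP x y) = word x ++ word y.
Proof. exact: charw_shiftU. Qed.

Lemma word_genP : word genP = [:: true].
Proof. by rewrite /word /charw /= enum_ordSl enum_ord0 /= in_set1. Qed.

Lemma trioid_P : is_trioid pL pR pP.
Proof.
repeat split; move=> x y z; apply: word_inj.
all: by rewrite ?(wordL, wordR, wordP, size_cat, size_nseq, nseqD, catA).
Qed.

Lemma phi_teq s t : teq s t -> phi s = phi t.
Proof.
have [a1 [a2 [a3 [a4 [a5 [a6 [a7 [a8 [a9 [a10 a11]]]]]]]]]] := trioid_P.
by elim=> //= *; congruence.
Qed.

Lemma deg_phi t : deg (phi t) = leaves t.
Proof. by elim: t => //= a IHa b IHb; rewrite -IHa -IHb. Qed.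

Lemma size_word_phi t : size (word (phi t)) = leaves t.
Proof. by rewrite size_word deg_phi. Qed.

Fixpoint lcomb (n : nat) : term := if n is k.+1 then tL tX (lcomb k) else tX.

Lemma leaves_lcomb n : leaves (lcomb n) = n.+1.
Proof. by elim: n => //= n ->. Qed.

Lemma word_lcomb n : word (phi (lcomb n)) = true :: nseq n false.
Proof. by elim: n => [|n IH] /=; rewrite ?wordL word_genP // IH /= size_nseq. Qed.

Lemma lcomb_tL_tX n : teq (tL (lcomb n) tX) (lcomb n.+1).
Proof.
elim: n => [|n IH] /=; first exact: teq_refl.
exact: teq_trans (ax1 _ _ _) (teq_L (teq_refl _) IH).
Qed.

Lemma lcomb_tL n u : teq (tL (lcomb n) u) (lcomb (n + leaves u)).
Proof.
elim: u n => [|a IHa b IHb|a IHa b IHb|a IHa b IHb] n /=.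
- by rewrite addn1; apply: lcomb_tL_tX.
- rewrite addnA; apply: teq_trans (teq_sym (ax1 _ _ _)) _.
  exact: teq_trans (teq_L (IHa n) (teq_refl b)) (IHb _).
- rewrite addnA; apply: teq_trans (teq_sym (ax2 _ _ _)) _.
  exact: teq_trans (teq_L (IHa n) (teq_refl b)) (IHb _).
- rewrite addnA; apply: teq_trans (teq_sym (ax6 _ _ _)) _.
  exact: teq_trans (teq_L (IHa n) (teq_refl b)) (IHb _).
Qed.

Fixpoint nf (s : seq bool) : term :=
  if s is b :: s' then
    if has id s' then (if b then tP else tR) tX (nf s') else lcomb (size s')
  else tX.

Lemma hasNid_nseq (s : seq bool) : ~~ has id s -> s = nseq (size s) false.
Proof. by move/hasPn=> s0; apply/all_pred1P/allP => -[] // /s0. Qed.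

Lemma word_nf s : has id s -> word (phi (nf s)) = s.
Proof.
elim: s => // b s IH /=; case: ifP => [s1 _ | /negbT/hasNid_nseq-> /= b1].
  by case: b; rewrite /= ?wordP ?wordR word_genP IH.
by rewrite orbF in b1; rewrite b1 size_nseq word_lcomb.
Qed.

Lemma nf_tR u B : has id B -> teq (tR u (nf B)) (nf (nseq (leaves u) false ++ B)).
Proof.
elim: u B => [|a IHa b IHb|a IHa b IHb|a IHa b IHb] B B1 /=.
  by rewrite B1; apply: teq_refl.
all: have bB1 : has id (nseq (leaves b) false ++ B) by rewrite has_cat B1 orbT.
all: rewrite nseqD -catA.
all: apply: teq_trans _ (teq_trans (teq_R (teq_refl a) (IHb B B1)) (IHa _ bB1)).
- exact: ax4.
- exact: ax5.
- exact: ax10.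
Qed.

Lemma nf_tL A u : has id A -> teq (tL (nf A) u) (nf (A ++ nseq (leaves u) false)).
Proof.
elim: A => // b A IH /=; case: ifP => [A1 _ | /negbT/hasNid_nseq-> /= b1].
  rewrite has_cat A1; case: b => /=.
  - exact: teq_trans (ax7 _ _ _) (teq_P (teq_refl _) (IH A1)).
  - exact: teq_trans (ax3 _ _ _) (teq_R (teq_refl _) (IH A1)).
by rewrite orbF in b1; rewrite b1 -nseqD has_nseq andbF !size_nseq; apply: lcomb_tL.
Qed.

Lemma nf_tP A B : has id A -> has id B -> teq (tP (nf A) (nf B)) (nf (A ++ B)).
Proof.
move=> + B1; elim: A => // b A IH /=; case: ifP => [A1 _ | /negbT/hasNid_nseq-> /= b1].
  rewrite has_cat A1; case: b => /=.
  - exact: teq_trans (ax11 _ _ _) (teq_P (teq_refl _) (IH A1)).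
  - exact: teq_trans (ax9 _ _ _) (teq_R (teq_refl _) (IH A1)).
rewrite orbF in b1; rewrite b1 size_nseq has_cat B1 orbT /=.
case: (size A) => [|n]; first exact: teq_refl.
apply: teq_trans (ax8 _ _ _) (teq_P (teq_refl _) _).
by rewrite -(leaves_lcomb n); apply: nf_tR.
Qed.

Lemma teq_nf_word t : teq t (nf (word (phi t))).
Proof.
elim: t => [|a IHa b IHb|a IHa b IHb|a IHa b IHb] /=.
- by rewrite word_genP; apply: teq_refl.
- rewrite wordL size_word_phi.
  exact: teq_trans (teq_L IHa (teq_refl b)) (nf_tL _ (has_word _)).
- rewrite wordR size_word_phi.
  exact: teq_trans (teq_R (teq_refl a) IHb) (nf_tR _ (has_word _)).
- rewrite wordP.
  exact: teq_trans (teq_P IHa IHb) (nf_tP (has_word _) (has_word _)).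
Qed.

Theorem proposition1p9 :
  is_trioid pL pR pP /\
  (forall s t : term, teq s t -> phi s = phi t) /\
  (forall s t : term, phi s = phi t -> teq s t) /\
  (forall x : P, exists t : term, phi t = x) /\
  (forall t : term, deg (phi t) = leaves t).
Proof.
split; first exact: trioid_P.
split; first exact: phi_teq.
split.
  move=> s t st; apply: teq_trans (teq_nf_word s) _.
  by rewrite st; apply: teq_sym; apply: teq_nf_word.
split; last exact: deg_phi.
by move=> x; exists (nf (word x)); apply: word_inj; rewrite word_nf ?has_word.
Qed.
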